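(* Let $\nu>\tfrac14$ and $\kappa>0$. Let $g_k, g_{k+1}, d_k\in\mathbb{R}^n$ with $g_k\neq 0$ and $d_k\neq 0$. Define $$\beta_k=\min\Big\{\frac{\big\langle g_{k+1},\, g_{k+1}-g_k-\frac{\nu\|g_{k+1}-g_k\|_2^2}{\|g_k\|_2^2}\,d_k\big\rangle_{+}}{\|g_k\|_2^2},\ \frac{\kappa\|g_{k+1}\|_2}{\|d_k\|_2}\Big\},$$ where $t_+=\max\{t,0\}$, and $d_{k+1}=-g_{k+1}+\beta_k d_k$. Then, with $\mu=\frac{4\nu-1}{4\nu(1+\kappa)}$, $$\langle d_{k+1},g_{k+1}\rangle\le -\mu\,\|d_{k+1}\|_2\,\|g_{k+1}\|_2 .$$
   Context: $\langle\cdot,\cdot\rangle$ is the Euclidean inner product and $\|\cdot\|=\|\cdot\|_2$ the Euclidean norm on $\mathbb{R}^n$. *)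

From mathcomp Require Import all_boot all_order all_algebra.
From mathcomp Require Import reals.
Set Implicit Arguments. Unset Strict Implicit. Unset Printing Implicit Defensive.
Import Order.TTheory GRing.Theory Num.Theory.
Local Open Scope ring_scope.

Definition dotv (R : realType) (n : nat) (u v : 'rV[R]_n) : R :=
  \sum_(i < n) u ord0 i * v ord0 i.

Definition norm2 (R : realType) (n : nat) (u : 'rV[R]_n) : R :=
  Num.sqrt (dotv u u).

Definition pos_part (R : realType) (t : R) : R := Num.max t 0.

From mathcomp Require Import all_boot all_order all_algebra.
From mathcomp Require Import reals.
From mathcomp Require Import lra ring.
Set Implicit Arguments. Unset Strict Implicit.
Import Order.TTheory GRing.Theory Num.Theory.
Local Open Scope ring_scope.

(* Expanding [0 <= |g_{k+1} - 2 nu u y|^2] with [u = <d_k, g_{k+1}> / |g_k|^2]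
   shows that [4 nu beta_k <d_k, g_{k+1}> <= |g_{k+1}|^2] whenever the first
   branch of the min bounds [beta_k]; the second branch and the triangle
   inequality give [|d_{k+1}| <= (1 + kappa) |g_{k+1}|].  Hence
   [<d_{k+1}, g_{k+1}> = - |g_{k+1}|^2 + beta_k <d_k, g_{k+1}>
      <= - (4 nu - 1) / (4 nu) |g_{k+1}|^2 <= - mu |d_{k+1}| |g_{k+1}|]. *)

Section EuclideanSpace.
Variables (R : realType) (n : nat).
Implicit Types (u v w : 'rV[R]_n) (a : R).

Lemma dotvC u v : dotv u v = dotv v u.
Proof. by apply: eq_bigr => i _; rewrite mulrC. Qed.

Lemma dotvDl u v w : dotv (u + v) w = dotv u w + dotv v w.
Proof. by rewrite /dotv -big_split; apply: eq_bigr => i _; rewrite mxE mulrDl. Qed.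

Lemma dotvZl a u w : dotv (a *: u) w = a * dotv u w.
Proof. by rewrite /dotv mulr_sumr; apply: eq_bigr => i _; rewrite mxE mulrA. Qed.

Lemma dotvNl u w : dotv (- u) w = - dotv u w.
Proof. by rewrite -scaleN1r dotvZl mulN1r. Qed.

Lemma dotv0l w : dotv 0 w = 0.
Proof. by rewrite -(scale0r w) dotvZl mul0r. Qed.

Lemma dotvDr u v w : dotv w (u + v) = dotv w u + dotv w v.
Proof. by rewrite !(dotvC w) dotvDl. Qed.

Lemma dotvZr a u w : dotv w (a *: u) = a * dotv w u.
Proof. by rewrite !(dotvC w) dotvZl. Qed.

Lemma dotvNr u w : dotv w (- u) = - dotv w u.
Proof. by rewrite !(dotvC w) dotvNl. Qed.

Let dotvE := (dotvDl, dotvDr, dotvZl, dotvZr, dotvNl, dotvNr).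

Lemma dotvv_ge0 u : 0 <= dotv u u.
Proof. by apply: sumr_ge0 => i _; rewrite -expr2 sqr_ge0. Qed.

Lemma dotvv_eq0 u : (dotv u u == 0) = (u == 0).
Proof.
apply/idP/eqP => [|->]; last by rewrite dotv0l.
rewrite psumr_eq0 => [/allP u0|i _]; last by rewrite -expr2 sqr_ge0.
apply/rowP => i; rewrite mxE.
by apply/eqP; move: (u0 i (mem_index_enum i)); rewrite mulf_eq0 orbb.
Qed.

Lemma norm2_ge0 u : 0 <= norm2 u.
Proof. exact: sqrtr_ge0. Qed.

Lemma norm2_sq u : norm2 u ^+ 2 = dotv u u.
Proof. by rewrite sqr_sqrtr // dotvv_ge0. Qed.

Lemma norm2_gt0 u : (0 < norm2 u) = (u != 0).
Proof. by rewrite sqrtr_gt0 lt_def dotvv_ge0 dotvv_eq0 andbT. Qed.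

Lemma norm2Z a u : norm2 (a *: u) = `|a| * norm2 u.
Proof. by rewrite /norm2 dotvZl dotvZr mulrA -expr2 sqrtrM ?sqr_ge0 // sqrtr_sqr. Qed.

Lemma norm2N u : norm2 (- u) = norm2 u.
Proof. by rewrite -scaleN1r norm2Z normrN1 mul1r. Qed.

Lemma dotv_young a u v : 4 * a * (dotv u v - a * dotv v v) <= dotv u u.
Proof. by have := dotvv_ge0 (u - (2 * a) *: v); rewrite !dotvE (dotvC v u); lra. Qed.

Lemma dotv_le_norm2 u v : dotv u v <= norm2 u * norm2 v.
Proof.
have [->|u0] := eqVneq u 0; first by rewrite dotv0l mulr_ge0 ?norm2_ge0.
have [->|v0] := eqVneq v 0; first by rewrite dotvC dotv0l mulr_ge0 ?norm2_ge0.
have st_gt0 : 0 < norm2 u * norm2 v by rewrite mulr_gt0 ?norm2_gt0.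
have := dotvv_ge0 (norm2 v *: u - norm2 u *: v).
by rewrite !dotvE (dotvC v u) -!norm2_sq; nra.
Qed.

Lemma ler_norm2D u v : norm2 (u + v) <= norm2 u + norm2 v.
Proof.
have := dotv_le_norm2 u v; have := norm2_sq (u + v).
rewrite !dotvE (dotvC v u) -!norm2_sq.
have := norm2_ge0 (u + v); have := norm2_ge0 u; have := norm2_ge0 v; nra.
Qed.

(* [G] plays the role of [|g_k|^2]; the bound on [beta] is the first branch
   of the min defining [beta_k]. *)
Lemma beta_dotv_le nu G beta (g1 y d : 'rV[R]_n) :
  0 <= nu -> 0 < G -> 0 <= beta ->
  beta <= pos_part (dotv g1 (y - (nu * norm2 y ^+ 2 / G) *: d)) / G ->
  4 * nu * (beta * dotv d g1) <= norm2 g1 ^+ 2.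
Proof.
move=> nu_ge0 G_gt0 beta_ge0 beta_le; rewrite norm2_sq.
have nu4_ge0 : 0 <= 4 * nu by rewrite mulr_ge0.
have [p_le0|p_gt0] := lerP (dotv d g1) 0.
  by rewrite (le_trans _ (dotvv_ge0 g1)) // mulr_ge0_le0 // mulr_ge0_le0.
set X := dotv g1 _ in beta_le; set u := dotv d g1 / G.
have u_ge0 : 0 <= u by rewrite divr_ge0 // ltW.
have beta_p : beta * dotv d g1 <= Num.max (X * u) 0.
  by rewrite -(mul0r u) -maxr_pMl // mulrA -mulrAC ler_wpM2r // ltW.
have Xu : X * u = dotv g1 (u *: y) - nu * dotv (u *: y) (u *: y).
  by rewrite /X /u !dotvE -norm2_sq (dotvC g1 d); field; rewrite gt_eqF.
rewrite Xu in beta_p; apply: le_trans (ler_wpM2l nu4_ge0 beta_p) _.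
by rewrite maxr_pMr // ge_max mulr0 dotvv_ge0 dotv_young.
Qed.

End EuclideanSpace.

Theorem lemma1 (R : realType) (n : nat) (nu kappa : R)
  (gk gk1 dk : 'rV[R]_n) :
  1 / 4 < nu -> 0 < kappa ->
  gk != 0 -> dk != 0 ->
  let y := gk1 - gk in
  let betak :=
    Num.min
      (pos_part (dotv gk1 (y - (nu * norm2 y ^+ 2 / norm2 gk ^+ 2) *: dk))
         / norm2 gk ^+ 2)
      (kappa * norm2 gk1 / norm2 dk) in
  let dk1 := - gk1 + betak *: dk in
  let mu := (4 * nu - 1) / (4 * nu * (1 + kappa)) in
  dotv dk1 gk1 <= - mu * norm2 dk1 * norm2 gk1.
Proof.
move=> nu_gt_quarter kappa_gt0 gk0 dk0; cbv zeta.
set betak := Num.min _ _; set dk1 := - gk1 + _; set mu := (4 * nu - 1) / _.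
have nu_gt0 : 0 < nu by lra.
have gk_gt0 : 0 < norm2 gk ^+ 2 by rewrite exprn_gt0 ?norm2_gt0.
have dk_gt0 : 0 < norm2 dk by rewrite norm2_gt0.
have s_ge0 := norm2_ge0 gk1.
have beta_ge0 : 0 <= betak.
  by rewrite le_min !divr_ge0 ?mulr_ge0 ?norm2_ge0 ?(ltW kappa_gt0) ?(ltW gk_gt0)
    // le_max lexx orbT.
have beta_dk : betak * norm2 dk <= kappa * norm2 gk1.
  by rewrite -ler_pdivlMr // /betak ge_min lexx orbT.
have descent : 4 * nu * (betak * dotv dk gk1) <= norm2 gk1 ^+ 2.
  apply: (beta_dotv_le (y := gk1 - gk)) (ltW nu_gt0) gk_gt0 beta_ge0 _.
  by rewrite /betak ge_min lexx.
have dk1_le : norm2 dk1 <= (1 + kappa) * norm2 gk1.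
  apply: le_trans (ler_norm2D _ _) _.
  by rewrite norm2N norm2Z ger0_norm //; lra.
have mu_ge0 : 0 <= mu by rewrite divr_ge0 ?mulr_ge0; lra.
have mu_comp : 1 - mu * (1 + kappa) = (4 * nu)^-1.
  rewrite /mu; field; apply/andP; split; rewrite gt_eqF //; lra.
have beta_p : betak * dotv dk gk1 <= (1 - mu * (1 + kappa)) * norm2 gk1 ^+ 2.
  by rewrite mu_comp [_^-1 * _]mulrC ler_pdivlMr ?mulr_gt0 // mulrC.
have := ler_wpM2l (mulr_ge0 mu_ge0 s_ge0) dk1_le.
rewrite /dk1 dotvDl dotvNl dotvZl -norm2_sq; lra.
Qed.
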